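(* Let $C$ be a finite set of $m$ candidates, $N=\{1,\dots,n\}$ voters with weak orders over $C$, $k\le m$ a positive integer, $\mathbf w\in\mathbb N^m$ non-increasing and $\boldsymbol\alpha\in\mathbb R^k$ with $\alpha_1\ge\dots\ge\alpha_k\ge0$. Set $w_{m+1}=0$, $w'_r=w_r-w_{r+1}$. Consider the integer program (OWA-IP) with variables $x_{i,\ell,r}$ ($i\in N,\ell\in[k],r\in[m]$) and $y_c$ ($c\in C$): maximise $\sum_{i\in N}\sum_{\ell\in[k]}\sum_{r\in[m]}\alpha_\ell w'_r x_{i,\ell,r}$ subject to $\sum_{c\in C}y_c=k$; $\sum_{\ell\in[k]}x_{i,\ell,r}\le\sum_{c:\ \mathrm{rank}_i(c)\le r}y_c$ for all $i\in N,r\in[m]$; $x_{i,\ell,r}\in\{0,1\}$; $y_c\in\{0,1\}$. Then the optimal value of (OWA-IP) equals $\max_{W\subseteq C,|W|=k}\sum_{i\in N}\boldsymbol\alpha\big((w_{\mathrm{rank}_i(c)})_{c\in W}\big)$, and for every optimal solution $W=\{c:y_c=1\}$ is an optimal committee for the OWA-based rule defined by $\boldsymbol\alpha$ and $\mathbf w$.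
   Context: Ranks: a weak order partitions $C$ into indifference classes $A_1\succ\dots\succ A_r$; a candidate in $A_t$ has rank $t$ (rank 1 = most preferred). For $\mathbf x\in\mathbb R^k$, $\boldsymbol\alpha(\mathbf x)=\sum_j\alpha_jx_{\sigma(j)}$ where $x_{\sigma(1)}\ge\dots\ge x_{\sigma(k)}$. The OWA-based rule selects a size-$k$ committee maximising $\sum_i\boldsymbol\alpha((w_{\mathrm{rank}_i(c)})_{c\in W})$. *)

From HB Require Import structures.
From mathcomp Require Import all_boot all_order all_algebra.
From mathcomp Require Import reals.
Set Implicit Arguments. Unset Strict Implicit. Unset Printing Implicit Defensive.
Import Order.TTheory GRing.Theory Num.Theory.
Local Open Scope ring_scope.

Section Defs.
Variable C : finType.

(* A weak order: R a b means "a is weakly preferred to b" (a ⪰ b). *)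
Definition weak_order (R : rel C) : Prop :=
  (forall a b, R a b || R b a) /\ transitive R.

Definition indiff_class (R : rel C) (e : C) : {set C} :=
  [set d | R d e && R e d].

Definition rank (R : rel C) (c : C) : nat :=
  (#|[set indiff_class R e | e in [set e | R e c && ~~ R c e]]|).+1.

Variable (Rt : realType) (k : nat) (alpha : 'I_k -> Rt).

Definition owa (s : seq Rt) : Rt :=
  \sum_(j < k) alpha j * nth 0 (sort (>=%R) s) j.

Variable (n : nat) (P : 'I_n -> rel C) (w : nat -> nat).

Definition owa_score (W : {set C}) : Rt :=
  \sum_(i < n) owa [seq ((w (rank (P i) c))%:R : Rt) | c <- enum W].

Definition optimal_committee (W : {set C}) : Prop :=
  #|W| = k /\ forall W' : {set C}, #|W'| = k -> owa_score W' <= owa_score W.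

Variable m : nat.

Definition wext (r : nat) : nat := if (r <= m)%N then w r else 0%N.
Definition wdiff (r : nat) : Rt := (wext r)%:R - (wext r.+1)%:R.

Definition ip_feasible (x : 'I_n -> 'I_k -> nat -> bool) (y : C -> bool) : Prop :=
  (\sum_(c : C) (y c : nat) = k)%N /\
  forall (i : 'I_n) (r : nat), (1 <= r <= m)%N ->
    (\sum_(l < k) (x i l r : nat) <= #|[set c | y c && (rank (P i) c <= r)%N]|)%N.

Definition ip_obj (x : 'I_n -> 'I_k -> nat -> bool) : Rt :=
  \sum_(i < n) \sum_(l < k) \sum_(1 <= r < m.+1) alpha l * wdiff r * ((x i l r : nat)%:R).

Definition ip_optimal x y : Prop :=
  ip_feasible x y /\
  forall x' y', ip_feasible x' y' -> ip_obj x' <= ip_obj x.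

End Defs.

(* For a committee W and a voter i let N_i(r) be the number of members of W of
   rank at most r.  The j-th largest of the scores w_(rank_i c), c in W, equals
   sum_r w'_r [j < N_i(r)]: the sum telescopes from the least r with
   N_i(r) > j, which is the j-th smallest rank.  Hence x_(i,l,r) = [l < N_i(r)],
   y = 1_W is a feasible solution whose objective is the OWA score of W.
   Conversely, feasibility allows at most N_i(r) of the x_(i,l,r) to be 1, and
   as alpha is nonincreasing and nonnegative and w' >= 0, the objective of any
   feasible (x, y) is at most that of the solution built from {c | y_c = 1}. *)

From mathcomp Require Import all_boot all_order all_algebra.
From mathcomp Require Import reals.
Import Order.TTheory GRing.Theory Num.Theory.
Local Open Scope ring_scope.

Lemma sort_ge_map_antitone (d : Order.disp_t) (T : orderType d) (f : nat -> T)
    (s : seq nat) :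
  {in s &, forall x y, (x <= y)%N -> (f y <= f x)%O} ->
  sort >=%O (map f s) = map f (sort leq s).
Proof.
move=> f_anti.
have ge_tr : transitive (>=%O : rel T) by move=> y x z /= yx zy; exact: le_trans zy yx.
have ge_anti : antisymmetric (>=%O : rel T).
  by move=> x y /andP[yx xy]; apply/le_anti/andP.
apply: (sorted_eq ge_tr ge_anti).
- by apply: sort_sorted => x y; exact: le_total.
- rewrite sorted_map; apply: (sub_in_sorted (P := mem s));
    last exact: sort_sorted leq_total s.
    by move=> x y xs ys /= /f_anti; apply.
  by apply/allP => x; rewrite mem_sort.
- by rewrite perm_sort perm_sym; apply: perm_map; rewrite perm_sort.
Qed.

Lemma sorted_leq_count_le (u : seq nat) (j r : nat) :
  sorted leq u -> (j < size u)%N ->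
  (j < count (fun x => x <= r) u)%N = (nth 0 u j <= r)%N.
Proof.
elim: u j => [|x u IHu] j //= /[dup] /path_sorted u_sorted /(order_path_min leq_trans).
move=> /allP x_min j_lt.
case: (leqP x r) => [xr | rx].
  case: j j_lt => [|j] j_lt /=; first by rewrite xr.
  by rewrite add1n ltnS IHu.
have -> : count (fun y => y <= r)%N u = 0%N.
  apply/eqP; rewrite -leqn0 leqNgt -has_count; apply/hasPn => y /x_min xy /=.
  by rewrite -ltnNge (leq_trans rx xy).
case: j j_lt => [|j] j_lt; apply/esym/negbTE; rewrite -ltnNge //=.
by rewrite (leq_trans rx) // x_min // mem_nth.
Qed.

Lemma sum_le_sum_prefix (R : numDomainType) (k N : nat) (a : 'I_k -> R)
    (S : {set 'I_k}) :
  (forall l1 l2 : 'I_k, (l1 <= l2)%N -> a l2 <= a l1) -> (forall l, 0 <= a l) ->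
  (#|S| <= N)%N -> \sum_(l in S) a l <= \sum_(l < k | (l < N)%N) a l.
Proof.
move=> a_anti a_ge0 card_S.
set T := [set l : 'I_k | (l < N)%N].
rewrite [leRHS](eq_bigl (fun l => l \in T)); last by move=> l; rewrite inE.
rewrite (big_setID T) [leRHS](big_setID S) setIC lerD2l.
have [N_lt_k | k_le_N] := ltnP N k; last first.
  have -> : S :\: T = set0.
    by apply/setP => l; rewrite !inE (leq_trans (ltn_ord l) k_le_N).
  by rewrite big_set0 sumr_ge0.
pose aN := a (Ordinal N_lt_k).
have card_T : #|T| = N.
  rewrite -sum1_card (eq_bigl (fun l : 'I_k => (l < N)%N)) => [|l]; last by rewrite inE.
  by rewrite -(big_ord_widen _ (fun=> 1%N) (ltnW N_lt_k)) sum1_card card_ord.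
have card_ST : (#|S :\: T| <= #|T :\: S|)%N.
  by rewrite !cardsD setIC leq_sub2r // card_T.
(* indices of S outside the prefix weigh at most [aN], the missed ones at least [aN] *)
apply: (@le_trans _ _ (#|S :\: T|%:R * aN)).
  rewrite mulr_natl -sumr_const; apply: ler_sum => l.
  by rewrite !inE -leqNgt => /andP[N_le_l _]; apply: a_anti.
apply: (@le_trans _ _ (#|T :\: S|%:R * aN)).
  by apply: ler_wpM2r; [exact: a_ge0 | rewrite ler_nat].
rewrite mulr_natl -sumr_const; apply: ler_sum => l.
by rewrite !inE => /andP[_ l_lt_N]; apply: a_anti; rewrite ltnW.
Qed.

Lemma rank_le_card (C : finType) (R : rel C) (c : C) :
  reflexive R -> (rank R c <= #|C|)%N.
Proof.
move=> R_refl; set A := [set e | R e c && ~~ R c e].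
have c_notin_A : c \notin A by rewrite inE R_refl andbF.
have card_A : (#|A| < #|C|)%N.
  rewrite -cardsT; apply: proper_card; rewrite properT.
  by apply: contraNneq c_notin_A => ->; rewrite inE.
exact: leq_ltn_trans (leq_imset_card _ _) card_A.
Qed.

Lemma weak_order_refl (C : finType) (R : rel C) : weak_order R -> reflexive R.
Proof. by move=> [R_total _] c; have := R_total c c; rewrite orbb. Qed.

Lemma card_set_in_count (C : finType) (W : {set C}) (p : pred C) :
  #|[set c in W | p c]| = count p (enum W).
Proof.
by rewrite -sum1_count big_enum_cond -sum1_card; apply: eq_bigl => c; rewrite inE.
Qed.

Definition ip_x_of_committee (C : finType) (n k : nat) (P : 'I_n -> rel C)
    (W : {set C}) :
  'I_n -> 'I_k -> nat -> bool :=
  fun i l r => (l < #|[set c in W | rank (P i) c <= r]|)%N.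
Arguments ip_x_of_committee {C n} k P W.

Section OwaIP.

Context {Rt : realType} {C : finType} {m n k : nat}.
Context {P : 'I_n -> rel C} {w : nat -> nat} {alpha : 'I_k -> Rt}.

Hypothesis card_C : #|C| = m.
Hypothesis P_weak : forall i, weak_order (P i).
Hypothesis w_antitone :
  forall r s : nat, (1 <= r)%N -> (r <= s)%N -> (s <= m)%N -> (w s <= w r)%N.
Hypothesis alpha_antitone :
  forall l1 l2 : 'I_k, (l1 <= l2)%N -> alpha l2 <= alpha l1.
Hypothesis alpha_ge0 : forall l : 'I_k, 0 <= alpha l.

Lemma wdiff_ge0 (r : nat) : (1 <= r <= m)%N -> 0 <= wdiff Rt w m r.
Proof.
case/andP=> r_ge1 r_le_m; rewrite /wdiff subr_ge0 ler_nat /wext r_le_m.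
by case: ifP => // r_lt_m; apply: w_antitone.
Qed.

Lemma sum_wdiff_from (r0 : nat) :
  (r0 <= m)%N -> \sum_(r0 <= r < m.+1) wdiff Rt w m r = (w r0)%:R.
Proof.
move=> r0_le_m; rewrite /wdiff.
under eq_bigr do rewrite -opprB.
by rewrite sumrN telescope_sumr ?opprB /wext ?r0_le_m ?ltnn ?subr0 // leqW.
Qed.

Lemma nth_sort_ge_wdiff (s : seq nat) (j : nat) :
  {in s, forall r, 1 <= r <= m}%N -> (j < size s)%N ->
  nth 0 (sort >=%R [seq (w r)%:R : Rt | r <- s]) j =
  \sum_(1 <= r < m.+1) wdiff Rt w m r * (j < count (fun q => q <= r) s)%N%:R.
Proof.
move=> s_range j_lt.
have w_anti_s : {in s &, forall x y, (x <= y)%N -> ((w y)%:R <= (w x)%:R :> Rt)}.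
  move=> x y /s_range/andP[x_ge1 _] /s_range/andP[_ y_le_m] x_le_y.
  by rewrite ler_nat w_antitone.
rewrite sort_ge_map_antitone // (nth_map 0) ?size_sort //.
set u := sort leq s; set r0 := nth 0 u j.
have u_sorted : sorted leq u by apply: sort_sorted leq_total s.
have /s_range/andP[r0_ge1 r0_le_m] : r0 \in s.
  by rewrite -(mem_sort leq) mem_nth ?size_sort.
under eq_bigr => r _ do
  rewrite -(count_sort leq) sorted_leq_count_le ?size_sort // -/u -/r0.
rewrite (big_cat_nat r0_ge1 (leqW r0_le_m)) big_nat_cond big1 /=; last first.
  by move=> r /andP[/andP[_ r_lt_r0] _]; rewrite leqNgt r_lt_r0 mulr0.
rewrite add0r -sum_wdiff_from //; apply: eq_big_nat => r /andP[r0_le_r _].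
by rewrite r0_le_r mulr1.
Qed.

Lemma ip_obj_of_committee {W : {set C}} :
  #|W| = k -> ip_obj alpha w m (ip_x_of_committee k P W) = owa_score alpha P w W.
Proof.
move=> card_W; apply: eq_bigr => i _; apply: eq_bigr => l _.
have rank_range : {in map (rank (P i)) (enum W), forall r, 1 <= r <= m}%N.
  move=> _ /mapP[c _ ->]; rewrite -card_C.
  exact/rank_le_card/weak_order_refl.
rewrite (map_comp (fun r => (w r)%:R)) nth_sort_ge_wdiff //; last first.
  by rewrite size_map -cardE card_W.
rewrite mulr_sumr; apply: eq_bigr => r _.
by rewrite /ip_x_of_committee card_set_in_count count_map mulrA.
Qed.

Lemma ip_feasible_of_committee {W : {set C}} :
  #|W| = k -> ip_feasible P m (ip_x_of_committee k P W) (fun c => c \in W).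
Proof.
move=> card_W; split.
  by rewrite -card_W -sum1_card [RHS]big_mkcond; apply: eq_bigr => c _; case: (c \in W).
move=> i r _; set N := #|_|.
have N_le_k : (N <= k)%N.
  by rewrite -card_W subset_leq_card //; apply/subsetP => c; rewrite inE => /andP[].
rewrite /ip_x_of_committee -/N (eq_bigr (fun l : 'I_k => (l < N)%N : nat)) //.
by rewrite -big_mkcond /= -(big_ord_widen _ (fun=> 1%N) N_le_k) sum1_card card_ord.
Qed.

Lemma card_ip_feasible_y {x : 'I_n -> 'I_k -> nat -> bool} {y : C -> bool} :
  ip_feasible P m x y -> #|[set c | y c]| = k.
Proof.
case=> sum_y _; rewrite -sum_y -sum1_card big_mkcond /=.
by apply: eq_bigr => c _; rewrite inE; case: (y c).
Qed.

Lemma ip_obj_le_owa_score {x : 'I_n -> 'I_k -> nat -> bool} {y : C -> bool} :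
  ip_feasible P m x y -> ip_obj alpha w m x <= owa_score alpha P w [set c | y c].
Proof.
move=> x_feas; rewrite -(ip_obj_of_committee (card_ip_feasible_y x_feas)).
apply: ler_sum => i _; rewrite exchange_big [leRHS]exchange_big /=.
apply: ler_sum_nat => r r_range.
have r_wdiff : 0 <= wdiff Rt w m r by apply: wdiff_ge0; rewrite -ltnS.
under eq_bigr do rewrite mulrAC.
under [leRHS]eq_bigr do rewrite mulrAC.
rewrite -!mulr_suml ler_wpM2r //.
under eq_bigr do rewrite mulr_natr mulrb.
under [leRHS]eq_bigr do rewrite mulr_natr mulrb.
rewrite -!big_mkcond /=.
rewrite (eq_bigl (fun l => l \in [set l | x i l r])); last by move=> l; rewrite inE.
apply: sum_le_sum_prefix => //.
have [_ /(_ i r r_range) cap] := x_feas.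
have card_on : #|[set l | x i l r]| = (\sum_(l < k) x i l r)%N.
  by rewrite -sum1dep_card big_mkcond; apply: eq_bigr => l _; case: (x i l r).
rewrite card_on (leq_trans cap) //; apply: eq_leq.
by apply: eq_card => c; rewrite !inE.
Qed.

Lemma exists_optimal_committee :
  (k <= #|C|)%N -> exists W, optimal_committee alpha P w W.
Proof.
move=> k_le_C.
have card_W0 : #|[set c in take k (enum C)]| == k.
  by rewrite cardsE (card_uniqP _) ?size_takel -?cardE // take_uniq // enum_uniq.
have [W /eqP card_W W_max] :=
  @arg_maxP _ _ _ _ (fun W : {set C} => #|W| == k) (owa_score alpha P w) card_W0.
by exists W; split=> // W' card_W'; apply: W_max; rewrite card_W'.
Qed.

Lemma ip_obj_le_optimal_score {x : 'I_n -> 'I_k -> nat -> bool} {y : C -> bool}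
    {W : {set C}} :
  optimal_committee alpha P w W -> ip_feasible P m x y ->
  ip_obj alpha w m x <= owa_score alpha P w W.
Proof.
move=> [_ W_max] x_feas.
exact: le_trans (ip_obj_le_owa_score x_feas) (W_max _ (card_ip_feasible_y x_feas)).
Qed.

Lemma ip_optimal_of_committee (W : {set C}) :
  optimal_committee alpha P w W ->
  ip_optimal alpha P w m (ip_x_of_committee k P W) (fun c => c \in W).
Proof.
move=> W_opt; have [card_W _] := W_opt.
split=> [|x y x_feas]; first exact: ip_feasible_of_committee.
by rewrite ip_obj_of_committee //; exact: ip_obj_le_optimal_score W_opt x_feas.
Qed.

Lemma ip_optimal_value (x : 'I_n -> 'I_k -> nat -> bool) (y : C -> bool) (W : {set C}) :
  ip_optimal alpha P w m x y -> optimal_committee alpha P w W ->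
  ip_obj alpha w m x = owa_score alpha P w W.
Proof.
move=> [x_feas x_max] W_opt; have [card_W _] := W_opt.
apply/le_anti; rewrite (ip_obj_le_optimal_score W_opt x_feas) /=.
by rewrite -ip_obj_of_committee //; apply: x_max (ip_feasible_of_committee card_W).
Qed.

Lemma ip_optimal_committee (x : 'I_n -> 'I_k -> nat -> bool) (y : C -> bool) :
  ip_optimal alpha P w m x y -> optimal_committee alpha P w [set c | y c].
Proof.
move=> [x_feas x_max]; split=> [|W card_W]; first exact: card_ip_feasible_y x_feas.
rewrite -ip_obj_of_committee //.
apply: le_trans (x_max _ _ (ip_feasible_of_committee card_W)) _.
exact: ip_obj_le_owa_score x_feas.
Qed.

End OwaIP.

Theorem mainTheorem6 (Rt : realType) (C : finType) (m n k : nat)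
    (P : 'I_n -> rel C) (w : nat -> nat) (alpha : 'I_k -> Rt) :
  #|C| = m ->
  (0 < k)%N -> (k <= m)%N ->
  (forall i, weak_order (P i)) ->
  (forall r s : nat, (1 <= r)%N -> (r <= s)%N -> (s <= m)%N -> (w s <= w r)%N) ->
  (forall l1 l2 : 'I_k, (l1 <= l2)%N -> alpha l2 <= alpha l1) ->
  (forall l : 'I_k, 0 <= alpha l) ->
  [/\ (exists x y, ip_optimal alpha P w m x y),
      (forall x y (W : {set C}), ip_optimal alpha P w m x y ->
          optimal_committee alpha P w W -> ip_obj alpha w m x = owa_score alpha P w W)
    & (forall x y, ip_optimal alpha P w m x y ->
          optimal_committee alpha P w [set c | y c])].
Proof.
move=> card_C _ k_le_m P_weak w_anti alpha_anti alpha_ge0.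
have [W W_opt] : exists W, optimal_committee alpha P w W.
  by apply: exists_optimal_committee; rewrite card_C.
split.
- exists (ip_x_of_committee k P W), (fun c => c \in W).
  exact: ip_optimal_of_committee card_C P_weak w_anti alpha_anti alpha_ge0 W W_opt.
- exact: ip_optimal_value card_C P_weak w_anti alpha_anti alpha_ge0.
- exact: ip_optimal_committee card_C P_weak w_anti alpha_anti alpha_ge0.
Qed.
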